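(* Let $f:(0,\infty)\to(0,\infty)$ satisfy $\lim_{\beta\to\infty}f(\beta)=\infty$, $\lim_{\beta\to\infty}\frac1\beta\log f(\beta)=0$ and $\lim_{\beta\to\infty}|\Lambda_\beta|/f(\beta)=\infty$, and let $\mathcal W=\{\sigma\in\mathcal S:|\mathrm{supp}[\sigma]|\le|\Lambda_\beta|/f(\beta)\}$. Then $$\lim_{\beta\to\infty}\frac1\beta\log\frac{\mu_\beta(\mathcal S\setminus\mathcal W)}{\mu_\beta(\mathcal S)}=-\infty.$$
   Context: Glauber setting. Fix $J>0$, $h>0$ with $0<h<2J$ and $2J/h\notin\mathbb N$; $\ell_c=\lceil 2J/h\rceil$. $\Lambda_\beta\subset\mathbb Z^2$: square box of odd side length centred at the origin with periodic boundary conditions, $|\Lambda_\beta|\to\infty$. State space $\mathcal X_\beta=\{-1,+1\}^{\Lambda_\beta}$, $\mathrm{supp}[\sigma]=\{x:\sigma(x)=+1\}$. Hamiltonian $H_\beta(\sigma)=-\frac J2\sum_{\{x,y\}}\sigma(x)\sigma(y)-\frac h2\sum_x\sigma(x)$ (unordered nearest-neighbour pairs); Gibbs measure $\mu_\beta=e^{-\beta H_\beta}/Z_\beta$. Bootstrap map $C_B(\sigma)$: replace each cluster of $(+1)$-spins by its circumscribed rectangle and iterate (merging rectangles at distance $<2$) until the $(+1)$-spins form rectangles pairwise at distance $\ge2$; subcritical: each such rectangle fits in an $(\ell_c-1)\times\ell_c$ rectangle. $\mathcal S=\{\sigma:C_B(\sigma)\text{ subcritical}\}$. *)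

From mathcomp Require Import all_boot.
From Stdlib Require Import Reals.
Set Implicit Arguments. Unset Strict Implicit. Unset Printing Implicit Defensive.

(* Odd side length of the box Lambda_beta, given its "half side" m. *)
Definition side (m : nat) : nat := (2 * m).+1.

(* Critical length l_c = ceil(2J/h); equals [up (2J/h)] since 2J/h is not an integer. *)
Definition lcrit (J h : R) : nat := Z.to_nat (up (2 * J / h)%R).

Section Glauber.
Variable L : nat.  (* side length of the torus Z_L x Z_L *)

Definition site := ('I_L * 'I_L)%type.
Definition config := {ffun site -> bool}.   (* true = +1, false = -1 *)

Definition supp (s : config) : {set site} := [set x | s x].

Definition cyc_nb (a c : nat) : bool := (c == a.+1 %% L) || (a == c.+1 %% L).

Definition nn (x y : site) : bool :=
  (x != y) &&
  ((((x.1 : nat) == y.1) && cyc_nb x.2 y.2) || (((x.2 : nat) == y.2) && cyc_nb x.1 y.1)).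

(* sites at (torus) Euclidean distance < 2, i.e. |dx| <= 1 and |dy| <= 1 *)
Definition close (x y : site) : bool :=
  (((x.1 : nat) == y.1) || cyc_nb x.1 y.1) && (((x.2 : nat) == y.2) || cyc_nb x.2 y.2).

Definition restr (r : rel site) (A : {set site}) : rel site :=
  fun x y => [&& x \in A, y \in A & r x y].

Definition cluster (r : rel site) (A : {set site}) (x : site) : {set site} :=
  [set y | connect (restr r A) x y].

(* circumscribed rectangle of a connected set K: product of its projections
   (each projection of a connected set is an arc of the cycle Z_L) *)
Definition hull (K : {set site}) : {set site} :=
  [set z : site | [exists u in K, u.1 == z.1] && [exists v in K, v.2 == z.2]].

Definition step (r : rel site) (A : {set site}) : {set site} :=
  \bigcup_(x in A) hull (cluster r A x).

(* Bootstrap map: nn-clusters -> rectangles, then iteratively merge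
   rectangles at distance < 2 (step is extensive, so L*L iterations reach
   the fixed point). *)
Definition CB (s : config) : {set site} :=
  iter (L * L) (step close) (step nn (supp s)).

Definition fits (lc a b : nat) : bool :=
  ((a <= lc.-1) && (b <= lc)) || ((a <= lc) && (b <= lc.-1)).

Definition subcritical (lc : nat) (s : config) : bool :=
  [forall x in CB s,
     fits lc #|[set z.1 | z in cluster close (CB s) x]|
             #|[set z.2 | z in cluster close (CB s) x]|].

Definition spin (s : config) (x : site) : R := if s x then 1%R else (-1)%R.

(* H(s) = -J/2 sum_{unordered nn pairs} s(x)s(y) - h/2 sum_x s(x);
   the sum over unordered pairs is half the sum over ordered pairs. *)
Definition Ham (J h : R) (s : config) : R :=
  (- (J / 2) * (/ 2 * \big[Rplus/0%R]_(p : site * site | nn p.1 p.2)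
                           (spin s p.1 * spin s p.2))
   - (h / 2) * \big[Rplus/0%R]_(x : site) spin s x)%R.

Definition weight (J h beta : R) (s : config) : R := exp (- beta * Ham J h s)%R.

Definition Zpart (J h beta : R) : R := \big[Rplus/0%R]_(s : config) weight J h beta s.

Definition mu (J h beta : R) (P : pred config) : R :=
  (\big[Rplus/0%R]_(s : config | P s) weight J h beta s / Zpart J h beta)%R.

Definition inS (J h : R) (s : config) : bool := subcritical (lcrit J h) s.

Definition small_supp (bound : R) (s : config) : bool :=
  if Rle_dec (INR #|supp s|) bound then true else false.

(* W = { s in S : |supp s| <= bound } with bound = |Lambda_beta| / f(beta) *)
Definition inW (J h : R) (bound : R) (s : config) : bool :=
  inS J h s && small_supp bound s.

End Glauber.

(* Write A = supp(s), l_c = ceil(2J/h) and gain = 4J/l_c - h > 0.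
   1. Isoperimetry.  If s is subcritical, every close-cluster of C_B(s)
      has horizontal and vertical projections of size <= l_c.  Walking
      from any plus site in one of the four unit directions one therefore
      leaves A within l_c steps, through an "exit" of A; counting exits per
      direction gives |A| <= l_c |exits|, and exits in the four directions
      are distinct boundary edges, so 4|A| <= l_c |boundary A|.
   2. Energy.  H(s) = H(-1) + J |boundary A| - h |A|, so a subcritical s
      has weight <= weight(-1) exp(-beta gain |A|).
   3. Finite volume.  Summing over |A| > B = |Lambda|/F with a Chernoff
      factor F^{-|A|} bounds mu(S \ W | S) by exp(B (1 - beta gain + ln F));
      the sparse configuration with plus spins on the even sublattice lies
      in S \ W, so the ratio is positive and its logarithm is controlled.
   4. Limit.  For beta large, 1/beta and (ln F)/beta are small compared to
      gain and B gain > 2|M|, which gives the bound -M. *)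

From mathcomp Require Import all_boot zify.
From Stdlib Require Import Reals Lra Lia.
From HB Require Import structures.
Set Implicit Arguments. Unset Strict Implicit. Unset Printing Implicit Defensive.

Section CycleMaps.
Variable L : nat.

Definition aperiodic (f : 'I_L -> 'I_L) :=
  forall a n, 0 < n < L -> iter n f a != a.

Lemma aperiodic_iter_inj f a i j :
  aperiodic f -> i < L -> j < L -> iter i f a = iter j f a -> i = j.
Proof.
move=> fap iL jL; wlog ij : i j iL jL / i <= j => [hw E|E].
  by case: (leqP i j) => [|/ltnW] h; [exact: hw | apply/esym/hw].
move: ij; rewrite leq_eqVlt => /orP [/eqP //|lt_ij]; exfalso.
have := fap (iter i f a) (j - i); rewrite subn_gt0 lt_ij.
rewrite (leq_ltn_trans (leq_subr _ _) jL) -iterD subnK ?(ltnW lt_ij) // E.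
by rewrite eqxx => /(_ isT).
Qed.

Lemma iter_ordS (a : 'I_L) n : val (iter n (@ordS L) a) = (a + n) %% L.
Proof.
elim: n => [|n IH] /=; first by rewrite addn0 modn_small.
by rewrite IH -addn1 modnDml -addnA addn1 addnS.
Qed.

Lemma ordS_aperiodic : aperiodic (@ordS L).
Proof.
move=> a n /andP [n_gt0 nL]; apply/eqP => /(congr1 val); rewrite iter_ordS.
rewrite -[X in _ = X](modn_small (ltn_ord a)) -{2}[nat_of_ord a]addn0 => /eqP.
by rewrite eqn_modDl mod0n modn_small // => /eqP n0; rewrite n0 in n_gt0.
Qed.

Lemma ord_pred_aperiodic : aperiodic (@ord_pred L).
Proof.
move=> a n nL; apply: contraTneq (ordS_aperiodic a nL) => E.
have back m b : iter m (@ordS L) (iter m (@ord_pred L) b) = b.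
  by elim: m b => [|m IH] b //; rewrite iterSr iterS ord_predK IH.
by rewrite -{1}E back eqxx.
Qed.

Lemma ordS_neq (a : 'I_L) : 1 < L -> ordS a != a.
Proof. by move=> L1; apply: (ordS_aperiodic a (n := 1)). Qed.

Lemma ord_pred_neq (a : 'I_L) : 1 < L -> ord_pred a != a.
Proof. by move=> L1; apply: (ord_pred_aperiodic a (n := 1)). Qed.

Lemma ordS_neq_pred (a : 'I_L) : 2 < L -> ordS a != ord_pred a.
Proof.
move=> L2; apply: contraTneq (ordS_aperiodic a (n := 2) L2) => E.
by rewrite /= E ord_predK eqxx.
Qed.

Lemma cyc_nb_ordS (a : 'I_L) : cyc_nb L a (ordS a).
Proof. by rewrite /cyc_nb eqxx. Qed.

Lemma cyc_nb_ord_pred (a : 'I_L) : cyc_nb L a (ord_pred a).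
Proof.
have succ_pred : (ord_pred a).+1 %% L = a := congr1 val (ord_predK a).
by rewrite /cyc_nb succ_pred eqxx orbT.
Qed.

End CycleMaps.

Definition exits (T : finType) (A : {set T}) (g : T -> T) : {set T} :=
  [set e in A | g e \notin A].

Lemma exit_before (T : finType) (g : T -> T) (A : {set T}) x n :
  x \in A -> iter n g x \notin A -> exists2 j, j < n & iter j g x \in exits A g.
Proof.
move=> xA; elim: n => [|n IH] out; first by rewrite xA in out.
case: (boolP (iter n g x \in A)) => [inA | /IH [j jn ex]].
  by exists n; rewrite // inE inA.
by exists j; first exact: ltnW.
Qed.

(* If g is injective and every point of A reaches an exit within k steps,
   then A is covered by the k preimages iter j g ^-1 (exits), each of the
   size of the exit set. *)
Lemma card_le_exits (T : finType) (g : T -> T) (A : {set T}) k :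
  injective g ->
  (forall x, x \in A -> exists2 j, j < k & iter j g x \in exits A g) ->
  #|A| <= k * #|exits A g|.
Proof.
move=> g_inj reach.
have cover : A \subset \bigcup_(j < k) iter j g @^-1: exits A g.
  apply/subsetP=> x /reach [j jk ex]; apply/bigcupP.
  by exists (Ordinal jk); rewrite // inE.
apply: leq_trans (subset_leq_card cover) _.
rewrite -[k in k * _]card_ord -sum_nat_const.
elim/big_ind2: _ => [|U m V n Um Vn|j _]; first by rewrite cards0.
  by apply: leq_trans (leq_card_setU U V) _; exact: leq_add.
rewrite card_preimset //; elim: (nat_of_ord j) => [|i IH] //=.
exact: inj_comp.
Qed.

Section Torus.
Variable L : nat.
Implicit Types (A B : {set site L}) (x y : site L) (f : 'I_L -> 'I_L).

Definition hshift (f : 'I_L -> 'I_L) x : site L := (f x.1, x.2).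
Definition vshift (f : 'I_L -> 'I_L) x : site L := (x.1, f x.2).

Lemma iter_hshift f n x : iter n (hshift f) x = (iter n f x.1, x.2).
Proof. by elim: n => [|n IH] /=; [case: x | rewrite IH]. Qed.

Lemma iter_vshift f n x : iter n (vshift f) x = (x.1, iter n f x.2).
Proof. by elim: n => [|n IH] /=; [case: x | rewrite IH]. Qed.

(* Walking with close steps g: if the first k+1 points of the orbit of x
   all stayed in A (hence in B), they would lie in the close-cluster of x
   in B and have k+1 distinct projections, while that cluster has at most
   k of them. *)
Lemma run_leaves (T : finType) (pi : site L -> T) (g : site L -> site L) A B k x :
  (forall y, close y (g y)) ->
  (forall i j, i <= k -> j <= k -> pi (iter i g x) = pi (iter j g x) -> i = j) ->
  A \subset B -> #|[set pi z | z in cluster (@close L) B x]| <= k ->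
  exists2 n, n <= k & iter n g x \notin A.
Proof.
move=> g_close pi_inj AB width.
case: (pickP (fun n : 'I_k.+1 => iter n g x \notin A)) => [n out | all_in].
  by exists n; rewrite // -ltnS.
exfalso.
have inB m : m <= k -> iter m g x \in B.
  move=> mk; apply: (subsetP AB); have := all_in (Ordinal (mk : m < k.+1)).
  by move/negbFE.
have in_cluster n : n <= k -> iter n g x \in cluster (@close L) B x.
  elim: n => [|n IH] nk; first by rewrite inE connect0.
  rewrite inE (connect_trans _ (connect1 (_ : restr _ B (iter n g x) _))) //.
    by rewrite -inE IH // ltnW.
  by rewrite /restr inB ?(ltnW nk) // inB // g_close.
have orbit_sub : [set pi (iter (nat_of_ord j) g x) | j : 'I_k.+1]
                 \subset [set pi z | z in cluster (@close L) B x].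
  by apply/subsetP=> _ /imsetP [j _ ->]; rewrite imset_f // in_cluster // -ltnS.
have := leq_trans (subset_leq_card orbit_sub) width.
rewrite card_imset ?card_ord ?ltnn // => i j /pi_inj E.
by apply: val_inj; apply: E; rewrite -ltnS.
Qed.

Lemma card_le_exits_width (T : finType) (pi : site L -> T) g A B k :
  injective g -> (forall y, close y (g y)) ->
  (forall x i j, i <= k -> j <= k -> pi (iter i g x) = pi (iter j g x) -> i = j) ->
  A \subset B ->
  (forall x, x \in B -> #|[set pi z | z in cluster (@close L) B x]| <= k) ->
  #|A| <= k * #|exits A g|.
Proof.
move=> g_inj g_close pi_inj AB width; apply: card_le_exits => // x xA.
have [n nk out] := run_leaves g_close (pi_inj x) AB (width x (subsetP AB x xA)).
have [j jn ex] := exit_before xA out.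
by exists j; first exact: leq_trans jn nk.
Qed.

Lemma hshift_inj f : injective f -> injective (hshift f).
Proof. by move=> f_inj [a b] [c d] [/f_inj -> ->]. Qed.

Lemma vshift_inj f : injective f -> injective (vshift f).
Proof. by move=> f_inj [a b] [c d] [-> /f_inj ->]. Qed.

Definition unit_step (i : 'I_4) : site L -> site L :=
  match val i with
  | 0 => hshift (@ordS L)
  | 1 => hshift (@ord_pred L)
  | 2 => vshift (@ordS L)
  | _ => vshift (@ord_pred L)
  end.

Lemma neq_fst x y : x.1 != y.1 -> x != y.
Proof. by apply: contra_neq => ->. Qed.

Lemma neq_snd x y : x.2 != y.2 -> x != y.
Proof. by apply: contra_neq => ->. Qed.

Lemma unit_step_nn i x : 1 < L -> nn x (unit_step i x).
Proof.
move=> L1; rewrite /nn /unit_step /hshift /vshift.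
case: i => [[|[|[|[|?]]]] ?] //=;
  rewrite ?cyc_nb_ordS ?cyc_nb_ord_pred !eqxx ?orbT ?andbT.
- by apply: neq_fst; rewrite eq_sym ordS_neq.
- by apply: neq_fst; rewrite eq_sym ord_pred_neq.
- by apply: neq_snd; rewrite eq_sym ordS_neq.
- by apply: neq_snd; rewrite eq_sym ord_pred_neq.
Qed.

Lemma unit_step_inj x i j : 2 < L -> unit_step i x = unit_step j x -> i = j.
Proof.
move=> L2; have L1 : 1 < L by exact: ltnW.
rewrite /unit_step /hshift /vshift.
case: x => a b; case: i j => [[|[|[|[|?]]]] ?] [[|[|[|[|?]]]] ?] //= E;
  apply: val_inj => //=; exfalso;
  move: (congr1 fst E) (congr1 snd E) => /= /eqP E1 /eqP E2; move: E1 E2;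
  rewrite ?(eq_sym a) ?(eq_sym b) ?(eq_sym (ord_pred a) (ordS a));
  rewrite ?(eq_sym (ord_pred b) (ordS b)) ?(negbTE (ordS_neq _ L1));
  by rewrite ?(negbTE (ord_pred_neq _ L1)) ?(negbTE (ordS_neq_pred _ L2)).
Qed.

Lemma hshift_exits f A B k :
  injective f -> aperiodic f -> (forall a : 'I_L, cyc_nb L a (f a)) -> k < L ->
  A \subset B ->
  (forall x, x \in B -> #|[set z.1 | z in cluster (@close L) B x]| <= k) ->
  #|A| <= k * #|exits A (hshift f)|.
Proof.
move=> f_inj f_ap f_nb kL; apply: card_le_exits_width.
- exact: hshift_inj.
- by move=> y; rewrite /close /= f_nb eqxx orbT.
- move=> x i j ik jk; rewrite !iter_hshift /=.
  by apply: aperiodic_iter_inj; [| exact: leq_ltn_trans ik kL | exact: leq_ltn_trans jk kL].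
Qed.

Lemma vshift_exits f A B k :
  injective f -> aperiodic f -> (forall a : 'I_L, cyc_nb L a (f a)) -> k < L ->
  A \subset B ->
  (forall x, x \in B -> #|[set z.2 | z in cluster (@close L) B x]| <= k) ->
  #|A| <= k * #|exits A (vshift f)|.
Proof.
move=> f_inj f_ap f_nb kL; apply: card_le_exits_width.
- exact: vshift_inj.
- by move=> y; rewrite /close /= f_nb eqxx orbT.
- move=> x i j ik jk; rewrite !iter_vshift /=.
  by apply: aperiodic_iter_inj; [| exact: leq_ltn_trans ik kL | exact: leq_ltn_trans jk kL].
Qed.

Lemma unit_step_exits i A B k : k < L -> A \subset B ->
  (forall x, x \in B -> #|[set z.1 | z in cluster (@close L) B x]| <= k) ->
  (forall x, x \in B -> #|[set z.2 | z in cluster (@close L) B x]| <= k) ->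
  #|A| <= k * #|exits A (unit_step i)|.
Proof.
move=> kL AB width1 width2; rewrite /unit_step.
case: i => [[|[|[|[|?]]]] ?] //=.
- exact: hshift_exits (@ordS_inj L) (@ordS_aperiodic L) (@cyc_nb_ordS L) kL AB width1.
- exact: hshift_exits (@ord_pred_inj L) (@ord_pred_aperiodic L)
    (@cyc_nb_ord_pred L) kL AB width1.
- exact: vshift_exits (@ordS_inj L) (@ordS_aperiodic L) (@cyc_nb_ordS L) kL AB width2.
- exact: vshift_exits (@ord_pred_inj L) (@ord_pred_aperiodic L)
    (@cyc_nb_ord_pred L) kL AB width2.
Qed.

Definition boundary A : {set site L * site L} :=
  [set p | [&& nn p.1 p.2, p.1 \in A & p.2 \notin A]].

Lemma sum_exits_le n (dir : 'I_n -> site L -> site L) A :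
  (forall i x, nn x (dir i x)) -> (forall i j x, dir i x = dir j x -> i = j) ->
  \sum_(i < n) #|exits A (dir i)| <= #|boundary A|.
Proof.
move=> dir_nn dir_inj.
pose X := [set p : 'I_n * site L | p.2 \in exits A (dir p.1)].
have -> : \sum_(i < n) #|exits A (dir i)| = #|X|.
  transitivity (\sum_(i < n) \sum_(x in exits A (dir i)) 1).
    by apply: eq_bigr => i _; rewrite sum1_card.
  by rewrite pair_big_dep -sum1_card; apply: eq_bigl => p; rewrite /X inE.
have edge_inj : {in X &, injective (fun p => (p.2, dir p.1 p.2))}.
  by move=> [i x] [j y] _ _ /= [<-] /dir_inj ->.
rewrite -(card_in_imset edge_inj); apply: subset_leq_card.
apply/subsetP=> _ /imsetP [[i x] + ->].
by rewrite !inE /= => /andP [xA out]; rewrite dir_nn xA.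
Qed.

Lemma step_extensive (r : rel (site L)) (A : {set site L}) : A \subset step r A.
Proof.
apply/subsetP=> x xA; apply/bigcupP; exists x => //.
by rewrite inE; apply/andP; split; apply/existsP; exists x;
  rewrite inE connect0 eqxx.
Qed.

Lemma supp_sub_CB (s : config L) : supp s \subset CB s.
Proof.
rewrite /CB; elim: (L * L) => [|n IH] /=; first exact: step_extensive.
exact: subset_trans IH (step_extensive _ _).
Qed.

Lemma fits_le lc a b : fits lc a b -> (a <= lc) && (b <= lc).
Proof.
by case/orP=> /andP [ha hb]; rewrite ?ha ?hb ?(leq_trans ha (leq_pred _))
  ?(leq_trans hb (leq_pred _)).
Qed.

(* Isoperimetric inequality for subcritical configurations: every cluster
   of C_B(s) has both widths at most lc, so each of the four unit steps
   leaves supp s within lc steps, and the exits along the four directions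
   are distinct boundary edges. *)
Lemma subcritical_isoperimetry lc (s : config L) :
  1 < lc -> lc < L -> subcritical lc s ->
  4 * #|supp s| <= lc * #|boundary (supp s)|.
Proof.
move=> lc1 lcL /forallP sub.
have L2 : 2 < L by exact: leq_ltn_trans lc1 lcL.
have width x : x \in CB s ->
    (#|[set z.1 | z in cluster (@close L) (CB s) x]| <= lc) &&
    (#|[set z.2 | z in cluster (@close L) (CB s) x]| <= lc).
  by move=> xC; apply: fits_le; move: (sub x); rewrite xC.
have exits_bound i : #|supp s| <= lc * #|exits (supp s) (unit_step i)|.
  apply: unit_step_exits lcL (supp_sub_CB s) _ _ => x /width /andP [] //.
rewrite -[4]card_ord -sum_nat_const.
apply: (@leq_trans (\sum_(i < 4) lc * #|exits (supp s) (unit_step i)|)).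
  exact: leq_sum.
rewrite -big_distrr leq_mul2l sum_exits_le ?orbT // => [i x|i j x].
  by apply: unit_step_nn; exact: ltnW.
exact: unit_step_inj.
Qed.

End Torus.

Section Isolated.
Variable L : nat.
Implicit Types (A : {set site L}) (r : rel (site L)).

Definition isolated r A := forall u v, u \in A -> v \in A -> r u v -> u = v.

Lemma cluster_isolated r A x : isolated r A -> cluster r A x = [set x].
Proof.
move=> isoA; apply/setP=> y; rewrite !inE; apply/idP/eqP => [|->]; last first.
  exact: connect0.
have stuck : closed (restr r A) (pred1 x).
  by move=> u v /and3P [uA vA ruv]; rewrite /= (isoA u v uA vA ruv).
by move/(closed_connect stuck); rewrite !inE eqxx => /esym /eqP.
Qed.

Lemma hull1 (x : site L) : hull [set x] = [set x].
Proof.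
apply/setP=> z; rewrite !inE; apply/idP/eqP => [|->]; last first.
  by apply/andP; split; apply/exists_inP; exists x; rewrite ?inE.
case/andP=> /exists_inP [_ /set1P -> /eqP e1] /exists_inP [_ /set1P -> /eqP e2].
by case: x z e1 e2 => [a b] [c d] /= -> ->.
Qed.

Lemma step_isolated r A : isolated r A -> step r A = A.
Proof.
move=> isoA; rewrite /step (eq_bigr (fun x => [set x])) => [|x _]; last first.
  by rewrite cluster_isolated // hull1.
apply/setP=> z; apply/bigcupP/idP => [[x xA /set1P -> //]|zA].
by exists z; rewrite ?inE.
Qed.

Lemma nn_close x y : nn x y -> @close L x y.
Proof.
by rewrite /close => /andP [_ /orP [] /andP [/eqP -> nb]]; rewrite eqxx nb ?orbT.
Qed.

(* If the plus spins are pairwise at distance >= 2, the bootstrap map does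
   nothing and every cluster is a single site: s is subcritical. *)
Lemma subcritical_isolated lc (s : config L) :
  1 < lc -> isolated (@close L) (supp s) -> subcritical lc s.
Proof.
move=> lc1 iso_s.
have CB_s : CB s = supp s.
  rewrite /CB step_isolated => [|u v uA vA /nn_close]; last exact: iso_s.
  by elim: (L * L) => //= k ->; rewrite step_isolated.
apply/forallP=> x; apply/implyP=> _; rewrite CB_s cluster_isolated //.
by rewrite !imset_set1 !cards1 /fits; case: lc lc1 => [|[|lc]].
Qed.

End Isolated.

(* On the torus of side 2n+1, the sites with both coordinates even form an
   isolated set of n^2 sites. *)
Definition even_coords n : {set 'I_(side n)} :=
  [set (inord (2 * i) : 'I_(side n)) | i : 'I_n].

Definition sparse_config n : config (side n) :=
  [ffun x => (x.1 \in even_coords n) && (x.2 \in even_coords n)].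

Lemma even_lt_side n (i : 'I_n) : 2 * i < side n.
Proof. by rewrite ltnS leq_mul2l ltnW. Qed.

Lemma even_coordsP n (a : 'I_(side n)) :
  a \in even_coords n -> exists2 i, i < n & val a = 2 * i.
Proof. by case/imsetP=> i _ ->; exists i; rewrite //= inordK // even_lt_side. Qed.

Lemma even_coords_not_nb n (a c : 'I_(side n)) :
  a \in even_coords n -> c \in even_coords n -> ~~ cyc_nb (side n) a c.
Proof.
move=> /even_coordsP [i ilt ->] /even_coordsP [j jlt ->].
rewrite /cyc_nb /side !modn_small ?ltnS ?ltn_mul2l //.
by apply/negP=> /orP [] /eqP /(congr1 odd); rewrite /= !oddM.
Qed.

Lemma sparse_config_isolated n : isolated (@close (side n)) (supp (sparse_config n)).
Proof.
move=> [a b] [c d]; rewrite !inE !ffunE /= => /andP [ea eb] /andP [ec ed].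
case/andP=> /orP [/eqP e1|nb1] /orP [/eqP e2|nb2].
- by congr (_, _); apply: val_inj.
- by have := even_coords_not_nb eb ed; rewrite nb2.
- by have := even_coords_not_nb ea ec; rewrite nb1.
- by have := even_coords_not_nb ea ec; rewrite nb1.
Qed.

Lemma card_sparse_config n : #|supp (sparse_config n)| = n * n.
Proof.
have -> : supp (sparse_config n) = setX (even_coords n) (even_coords n).
  by apply/setP=> x; rewrite !inE ffunE.
rewrite cardsX card_imset ?card_ord // => i j /(congr1 val).
rewrite /= !inordK ?even_lt_side // => /eqP.
by rewrite eqn_mul2l /= => /eqP /val_inj.
Qed.

HB.instance Definition _ := Monoid.isComLaw.Build R 0%R Rplus
  (fun a b c => esym (Rplus_assoc a b c)) Rplus_comm Rplus_0_l.
HB.instance Definition _ := Monoid.isComLaw.Build R 1%R Rmult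
  (fun a b c => esym (Rmult_assoc a b c)) Rmult_comm Rmult_1_l.
HB.instance Definition _ := Monoid.isMulLaw.Build R 0%R Rmult Rmult_0_l Rmult_0_r.
HB.instance Definition _ := Monoid.isAddLaw.Build R Rmult Rplus
  Rmult_plus_distr_r Rmult_plus_distr_l.

Open Scope R_scope.

Lemma sumR1 (T : finType) (P : pred T) :
  \big[Rplus/0]_(i | P i) 1 = INR #|[set i | P i]|.
Proof.
rewrite (eq_bigl (fun i => i \in [set i | P i])) => [|i]; last by rewrite inE.
rewrite big_const; elim: #|_| => [|n IH] //; rewrite S_INR -IH /=; lra.
Qed.

Lemma iter_Rmult y n : iter n (Rmult y) 1 = y ^ n.
Proof. by elim: n => //= n ->. Qed.

(* Splitting a real sum along a predicate, with Rplus as the visible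
   operation (so that ring and lra recognise it). *)
Lemma bigID_R (T : finType) (P Q : pred T) (F : T -> R) :
  \big[Rplus/0]_(i | P i) F i
  = \big[Rplus/0]_(i | P i && Q i) F i + \big[Rplus/0]_(i | P i && ~~ Q i) F i.
Proof. exact: bigID. Qed.

Lemma exp_le x y : x <= y -> exp x <= exp y.
Proof. by case/Rle_lt_or_eq_dec=> [/exp_increasing/Rlt_le|->] //; right. Qed.

Lemma ln_le x y : 0 < x -> x <= y -> ln x <= ln y.
Proof.
by move=> x0; case/Rle_lt_or_eq_dec=> [/(ln_increasing _ _ x0)/Rlt_le|->] //; right.
Qed.

Section Energy.
Variable L : nat.
Implicit Types (s : config L) (x y : site L).

Lemma nn_sym x y : nn x y = nn y x.
Proof.
rewrite /nn eq_sym /cyc_nb; congr (_ && _); case: x y => [a b] [c d] /=.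
rewrite (eq_sym (nat_of_ord a)) (eq_sym (nat_of_ord b)).
by congr (_ || _); rewrite orbC // eq_sym.
Qed.

Definition disagreeing s : {set site L * site L} :=
  [set p | nn p.1 p.2 && (s p.1 != s p.2)].

(* Each disagreeing unordered pair is a boundary edge in one of its two
   orientations. *)
Lemma card_disagreeing s : #|disagreeing s| = (2 * #|boundary (supp s)|)%nat.
Proof.
pose swap (p : site L * site L) := (p.2, p.1).
have swap_inj : injective swap by move=> [a b] [c d] [-> ->].
have split_orient :
    disagreeing s = boundary (supp s) :|: swap @: boundary (supp s).
  apply/setP=> [[x y]]; rewrite !inE /=; apply/idP/orP.
  - case/andP=> xy; case sx: (s x); case sy: (s y) => //= _;
      [by left; rewrite xy | right].
    by apply/imsetP; exists (y, x); rewrite // !inE /= nn_sym xy sx sy.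
  - case=> [/and3P [-> -> /negbTE ->] //|/imsetP [[a b]]].
    by rewrite !inE /= => /and3P [ab sa /negbTE sb] [-> ->]; rewrite nn_sym ab sa sb.
have orient_disj : [disjoint boundary (supp s) & swap @: boundary (supp s)].
  apply/pred0P=> [[x y]]; apply/negP; rewrite /= !inE => /andP [].
  move=> /and3P [_ sx _] /imsetP [[a b]]; rewrite !inE => /and3P [_ _ sa] [ea eb].
  by rewrite /= -ea sx in sa.
rewrite split_orient cardsU (disjoint_setI0 orient_disj) cards0 subn0.
by rewrite card_imset // addnn mul2n.
Qed.

(* A nearest-neighbour pair contributes +1 if it agrees and -1 otherwise. *)
Lemma sum_spin_pairs s :
  \big[Rplus/0]_(p : site L * site L | nn p.1 p.2) (spin s p.1 * spin s p.2)
  = INR #|[set p : site L * site L | nn p.1 p.2]| - 2 * INR #|disagreeing s|.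
Proof.
pose differ (p : site L * site L) := s p.1 != s p.2.
have disagree_sum :
    \big[Rplus/0]_(p | nn p.1 p.2 && differ p) (spin s p.1 * spin s p.2)
    = - INR #|disagreeing s|.
  have -> : INR #|disagreeing s| = \big[Rplus/0]_(p | nn p.1 p.2 && differ p) 1.
    by rewrite sumR1.
  rewrite (big_morph Ropp Ropp_plus_distr Ropp_0).
  apply: eq_bigr => p /andP [_]; rewrite /differ /spin.
  by do 2 case: (s _); rewrite //= => _; ring.
have agree_sum :
    \big[Rplus/0]_(p | nn p.1 p.2 && ~~ differ p) (spin s p.1 * spin s p.2)
    = \big[Rplus/0]_(p | nn p.1 p.2 && ~~ differ p) 1.
  apply: eq_bigr => p /andP [_]; rewrite /differ /spin negbK => /eqP ->.
  by case: (s p.2); ring.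
rewrite -sumR1 [in LHS](bigID_R _ differ) [in RHS](bigID_R _ differ) /=.
rewrite disagree_sum agree_sum.
rewrite !sumR1 -/(disagreeing s).
(* The occurrences of each count differ only in how their finite index type
   is written; naming them lets ring identify them. *)
set D := INR #|disagreeing s|; set A := INR #|[set i | _ & ~~ differ i]|.
by ring.
Qed.

Lemma sum_spin s :
  \big[Rplus/0]_(x : site L) spin s x = INR #|supp s| - INR #|~: supp s|.
Proof.
have plus : \big[Rplus/0]_(x | s x) spin s x = INR #|supp s|.
  by rewrite -sumR1; apply: eq_bigr => x; rewrite /spin => ->.
have minus : \big[Rplus/0]_(x | ~~ s x) spin s x = - INR #|~: supp s|.
  have -> : ~: supp s = [set x | ~~ s x] by apply/setP=> x; rewrite !inE.
  rewrite -sumR1 (big_morph Ropp Ropp_plus_distr Ropp_0).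
  by apply: eq_bigr => x /negbTE; rewrite /spin => ->.
by rewrite (bigID_R _ (fun x => s x)) plus minus; ring.
Qed.

Definition all_minus : config L := [ffun _ => false].

Lemma supp_all_minus : supp all_minus = set0.
Proof. by apply/setP=> x; rewrite !inE ffunE. Qed.

Lemma subcritical_all_minus lc : (1 < lc)%nat -> subcritical lc all_minus.
Proof.
by move=> lc1; apply: subcritical_isolated => // u v; rewrite supp_all_minus inE.
Qed.

Lemma Ham_shift J h s :
  Ham J h s = Ham J h all_minus + J * INR #|boundary (supp s)| - h * INR #|supp s|.
Proof.
have no_disagreement : disagreeing all_minus = set0.
  by apply/setP=> x; rewrite !inE !ffunE andbF.
have compl : INR #|~: supp s| = INR #|[set: site L]| - INR #|supp s|.
  by rewrite cardsT -(cardsC (supp s)) plus_INR; ring.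
rewrite /Ham !sum_spin_pairs !sum_spin card_disagreeing no_disagreement.
by rewrite supp_all_minus setC0 !cards0 compl mult_INR /=; field.
Qed.

Lemma weight_subcritical J h b lc s :
  0 < J -> 0 <= b -> (1 < lc)%nat -> (lc < L)%nat -> subcritical lc s ->
  weight J h b s
  <= weight J h b all_minus * exp (- b * (4 * J / INR lc - h) * INR #|supp s|).
Proof.
move=> J0 b0 lc1 lcL sub.
have iso := le_INR _ _ (leP (subcritical_isoperimetry lc1 lcL sub)).
rewrite !mult_INR [INR 4]/= in iso.
have lc0 : 0 < INR lc by apply: lt_0_INR; apply/ltP; exact: ltnW.
have cost : 4 * J / INR lc * INR #|supp s| <= J * INR #|boundary (supp s)|.
  apply: (Rmult_le_reg_l (INR lc)) => //; field_simplify; last lra.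
  by have := Rmult_le_compat_l J _ _ (Rlt_le _ _ J0) iso; lra.
rewrite /weight -exp_plus (Ham_shift J h s); apply: exp_le.
by have := Rmult_le_compat_l b _ _ b0 cost; lra.
Qed.

End Energy.

Lemma sumR_ge0 (T : finType) (P : pred T) (F : T -> R) :
  (forall i, P i -> 0 <= F i) -> 0 <= \big[Rplus/0]_(i | P i) F i.
Proof. by move=> F0; elim/big_ind: _ => // *; lra. Qed.

Lemma sumR_le (T : finType) (P : pred T) (F G : T -> R) :
  (forall i, P i -> F i <= G i) ->
  \big[Rplus/0]_(i | P i) F i <= \big[Rplus/0]_(i | P i) G i.
Proof. by move=> FG; elim/big_ind2: _ => // *; lra. Qed.

Lemma sumR_ge_term (T : finType) (P : pred T) (F : T -> R) j :
  (forall i, 0 <= F i) -> P j -> F j <= \big[Rplus/0]_(i | P i) F i.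
Proof.
move=> F0 Pj; rewrite (bigD1 j Pj) /=.
by have := sumR_ge0 (P := fun i => P i && (i != j)) (fun i _ => F0 i); lra.
Qed.

Lemma sumR_le_full (T : finType) (P : pred T) (F : T -> R) :
  (forall i, 0 <= F i) -> \big[Rplus/0]_(i | P i) F i <= \big[Rplus/0]_(i : T) F i.
Proof.
move=> F0; rewrite [X in _ <= X](bigID_R _ P) /=.
by have := sumR_ge0 (P := fun i => ~~ P i) (fun i _ => F0 i); lra.
Qed.

Lemma exp_mul_INR z n : exp (z * INR n) = exp z ^ n.
Proof.
elim: n => [|n IH]; first by rewrite Rmult_0_r exp_0.
by rewrite S_INR Rmult_plus_distr_l Rmult_1_r exp_plus IH /= Rmult_comm.
Qed.

(* Generating function of the support size:
   sum_s exp(z |supp s|) = (1 + e^z)^|Lambda| <= exp(e^z |Lambda|). *)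
Lemma sum_exp_supp L z :
  \big[Rplus/0]_(s : config L) exp (z * INR #|supp s|)
  <= exp (exp z * INR #|[set: site L]|).
Proof.
have as_product (s : config L) : exp (z * INR #|supp s|) =
    \big[Rmult/1]_(x : site L) (if s x then exp z else 1).
  rewrite exp_mul_INR -big_mkcond /= (eq_bigl (fun x => x \in supp s)) => [|x].
    by rewrite big_const iter_Rmult.
  by rewrite inE.
rewrite (eq_bigr _ (fun s _ => as_product s)).
rewrite -(bigA_distr_bigA (fun (x : site L) (b : bool) => if b then exp z else 1)).
rewrite (eq_bigr (fun _ => exp z + 1)) => [|x _]; last by rewrite big_bool.
rewrite big_const -cardsT iter_Rmult exp_mul_INR; apply: pow_incr.
by have := exp_pos z; have := exp_ineq1_le (exp z); lra.
Qed.

Section FiniteVolume.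
Variables (L : nat) (J h b F : R).
Hypotheses (J_gt0 : 0 < J) (b_gt0 : 0 < b) (F_gt0 : 0 < F).
Hypotheses (lc_gt1 : (1 < lcrit J h)%nat) (lc_ltL : (lcrit J h < L)%nat).

(* Free-energy gain per plus spin of a subcritical configuration. *)
Let gain := 4 * J / INR (lcrit J h) - h.
(* The size threshold |Lambda| / F defining W. *)
Let B := INR (L * L) / F.
Let a := b * gain - ln F.
Hypothesis a_ge0 : 0 <= a.

Let w := @weight L J h b.
Let w0 := w (all_minus L).

Lemma weight_pos (s : config L) : 0 < w s.
Proof. exact: exp_pos. Qed.

Lemma weight_large_supp (s : config L) :
  inS J h s -> ~~ small_supp B s ->
  w s <= w0 * (exp (- a * B) * exp (- ln F * INR #|supp s|)).
Proof.
move=> sub large.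
have {}large : B < INR #|supp s|.
  by move: large; rewrite /small_supp; case: Rle_dec => // + _ => /Rnot_le_lt.
apply: Rle_trans (weight_subcritical h J_gt0 (Rlt_le _ _ b_gt0) lc_gt1 lc_ltL sub) _.
apply: Rmult_le_compat_l; first exact: Rlt_le (weight_pos _).
rewrite -exp_plus; apply: exp_le.
have := Rmult_le_compat_l a _ _ a_ge0 (Rlt_le _ _ large).
by rewrite /a -/gain; lra.
Qed.

(* Summing over the configurations: the weight of S \ W is at most
   w0 e^{-aB} (1 + 1/F)^|Lambda| <= w0 e^{-aB} e^B. *)
Lemma weight_S_minus_W :
  \big[Rplus/0]_(s | inS J h s && ~~ inW J h B s) w s
  <= w0 * exp (- a * B) * exp B.
Proof.
apply: Rle_trans (sumR_le (G := fun s =>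
  w0 * exp (- a * B) * exp (- ln F * INR #|supp s|)) _) _.
  move=> s /andP [sub notW]; rewrite Rmult_assoc; apply: weight_large_supp => //.
  by move: notW; rewrite /inW sub.
rewrite -big_distrr /=; apply: Rmult_le_compat_l.
  by apply: Rmult_le_pos; apply: Rlt_le; [exact: weight_pos | exact: exp_pos].
apply: Rle_trans (sumR_le_full _ (fun s => Rlt_le _ _ (exp_pos _))) _.
apply: Rle_trans (sum_exp_supp _ _) _.
rewrite exp_Ropp exp_ln // cardsT card_prod card_ord /B; right; congr exp.
by rewrite /Rdiv Rmult_comm.
Qed.

(* The all-minus configuration lies in S. *)
Lemma weight_S : w0 <= \big[Rplus/0]_(s | inS J h s) w s.
Proof.
apply: sumR_ge_term (fun s => Rlt_le _ _ (weight_pos s)) _.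
exact: subcritical_all_minus.
Qed.

(* Given a configuration in S \ W (so that the ratio is positive), the log
   of the conditional probability of S \ W given S is at most B (1 - a). *)
Lemma log_ratio_bound (s0 : config L) :
  inS J h s0 -> B < INR #|supp s0| ->
  ln (mu (L := L) J h b (fun s => inS J h s && ~~ inW J h B s)
      / mu (L := L) J h b (fun s => inS J h s))
  <= B * (1 - a).
Proof.
move=> sub0 large0.
set num := \big[Rplus/0]_(s | inS J h s && ~~ inW J h B s) w s.
set den := \big[Rplus/0]_(s | inS J h s) w s.
have den_gt0 : 0 < den by apply: Rlt_le_trans weight_S; exact: weight_pos.
have num_gt0 : 0 < num.
  apply: Rlt_le_trans (weight_pos s0) (sumR_ge_term (fun s => Rlt_le _ _ (weight_pos s)) _).
  by rewrite sub0 /= /inW sub0 /small_supp; case: Rle_dec => // le0; lra.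
have Z_gt0 : 0 < Zpart L J h b.
  apply: Rlt_le_trans (weight_pos s0) _.
  exact: (sumR_ge_term (P := xpredT) (fun s => Rlt_le _ _ (weight_pos s))).
have -> : mu (L := L) J h b (fun s => inS J h s && ~~ inW J h B s)
          / mu (L := L) J h b (fun s => inS J h s) = num / den.
  by rewrite /mu -/w -/num -/den; field; lra.
rewrite -[B * _]ln_exp; apply: ln_le; first exact: Rdiv_lt_0_compat.
have w0_gt0 : 0 < w0 by exact: weight_pos.
apply: Rle_trans (_ : num / den <= num / w0) _.
  apply: Rmult_le_compat_l (Rlt_le _ _ num_gt0) _.
  exact: Rinv_le_contravar w0_gt0 weight_S.
apply: Rle_trans (_ : num / w0 <= w0 * exp (- a * B) * exp B / w0) _.
  exact: Rmult_le_compat_r (Rlt_le _ _ (Rinv_0_lt_compat _ w0_gt0)) weight_S_minus_W.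
have -> : w0 * exp (- a * B) * exp B / w0 = exp (- a * B) * exp B.
  by field; apply: Rgt_not_eq.
by rewrite -exp_plus; right; congr exp; ring.
Qed.

End FiniteVolume.

Lemma lcrit_bounds J h : 0 < J -> 0 < h -> h < 2 * J ->
  (2 <= lcrit J h)%nat /\ INR (lcrit J h) <= 2 * J / h + 1.
Proof.
move=> J0 h0 hJ.
have ratio_gt1 : 1 < 2 * J / h.
  by apply: (Rmult_lt_reg_r h) => //; rewrite Rmult_1_l /Rdiv Rmult_assoc Rinv_l; lra.
have [up_gt up_le] := archimed (2 * J / h).
have up_ge0 : (0 <= up (2 * J / h))%Z by apply: le_IZR; lra.
have lc_up : INR (lcrit J h) = IZR (up (2 * J / h)).
  by rewrite /lcrit INR_IZR_INZ Znat.Z2Nat.id.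
split; last by rewrite lc_up; lra.
by apply/leP; apply: INR_lt; rewrite lc_up /=; lra.
Qed.

(* Since l_c < 2J/h + 1 < 4J/h, the gain 4J/l_c - h is positive. *)
Lemma gain_pos J h : 0 < J -> 0 < h -> h < 2 * J -> 0 < 4 * J / INR (lcrit J h) - h.
Proof.
move=> J0 h0 hJ; have [lc2 lc_le] := lcrit_bounds J0 h0 hJ.
have lc_gt0 : 0 < INR (lcrit J h) by apply: lt_0_INR; apply/ltP; exact: ltn_trans lc2.
have : h * INR (lcrit J h) <= h * (2 * J / h + 1) by apply: Rmult_le_compat_l; lra.
have -> : h * (2 * J / h + 1) = 2 * J + h by field; lra.
move=> hlc; apply/Rlt_0_minus; apply: (Rmult_lt_reg_r (INR (lcrit J h))) => //.
by rewrite /Rdiv Rmult_assoc Rinv_l; lra.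
Qed.

Definition eventually (P : R -> Prop) := exists b0, forall b, b > b0 -> P b.

Lemma eventually_and (P Q : R -> Prop) :
  eventually P -> eventually Q -> eventually (fun b => P b /\ Q b).
Proof.
move=> [b1 P1] [b2 Q2]; exists (Rmax b1 b2) => b b_gt; split.
- by apply: P1; apply: Rle_lt_trans b_gt; exact: Rmax_l.
- by apply: Q2; apply: Rle_lt_trans b_gt; exact: Rmax_r.
Qed.

Lemma eventually_inv_lt eps : 0 < eps -> eventually (fun b => 0 < b /\ / b < eps).
Proof.
move=> eps_gt0; exists (/ eps) => b b_gt.
have b_gt0 : 0 < b by apply: Rlt_trans b_gt; exact: Rinv_0_lt_compat.
split => //; rewrite -[eps]Rinv_inv; apply: Rinv_lt_contravar => //.
by apply: Rmult_lt_0_compat => //; exact: Rinv_0_lt_compat.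
Qed.

(* The sparse configuration has more than |Lambda|/F plus spins once F > 9,
   since (2n+1)^2 <= 9 n^2 for n >= 1. *)
Lemma sparse_exceeds n F : (1 <= n)%nat -> 9 < F ->
  INR (side n * side n) / F < INR #|supp (sparse_config n)|.
Proof.
move=> n_ge1 F_gt9; rewrite card_sparse_config !mult_INR /side S_INR mult_INR.
have n1 : 1 <= INR n by apply: (le_INR 1); apply/leP.
apply: (Rmult_lt_reg_r F); first lra.
rewrite /Rdiv Rmult_assoc Rinv_l /=; last lra.
have : 0 < (F - 9) * (INR n * INR n) by apply: Rmult_lt_0_compat; nra.
have : 0 <= (INR n - 1) * (5 * INR n + 1) by apply: Rmult_le_pos; lra.
nra.
Qed.

(* The final arithmetic: with a = b gain - ln F, and beta large enough that
   1/beta and |ln F|/beta are below gain/4 while B gain > 2|M|,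
   (1/beta) B (1 - a) <= -B gain/2 < -M. *)
Lemma decay_arith b B gain lnF M :
  0 < b -> 0 < gain -> / b < gain / 4 -> Rabs (/ b * lnF) < gain / 4 ->
  B * gain > 2 * Rabs M -> / b * (B * (1 - (b * gain - lnF))) < - M.
Proof.
move=> b_gt0 gain_gt0 inv_b small_log large_B.
have B_gt0 : 0 < B by have := Rabs_pos M; nra.
have -> : / b * (B * (1 - (b * gain - lnF))) = B * (/ b - gain + / b * lnF).
  by field; lra.
have := Rle_abs (/ b * lnF); have := Rle_abs M; nra.
Qed.

(* The sparse
   configuration guarantees that S \ W is not empty. *)
Lemma decay_at_beta J h n b F M :
  0 < J -> 0 < h -> h < 2 * J -> 0 < b ->
  let gain := 4 * J / INR (lcrit J h) - h in
  / b < gain / 4 -> Rabs (/ b * ln F) < gain / 4 ->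
  INR (side n * side n) > INR ((lcrit J h).+1 * (lcrit J h).+1) -> 9 < F ->
  INR (side n * side n) / F * gain > 2 * Rabs M ->
  / b * ln (mu (L := side n) J h b
              (fun s => inS J h s && ~~ inW J h (INR (side n * side n) / F) s)
            / mu (L := side n) J h b (fun s => inS J h s)) < - M.
Proof.
move=> J_gt0 h_gt0 hJ b_gt0 gain inv_b log_small vol_big F_big ratio_big.
have [lc_ge2 _] := lcrit_bounds J_gt0 h_gt0 hJ.
have lc_lt_side : (lcrit J h < side n)%nat.
  by move/INR_lt/ltP: vol_big; rewrite /side; nia.
have n_ge1 : (1 <= n)%nat by move: lc_lt_side lc_ge2; rewrite /side; lia.
have F_gt0 : 0 < F by lra.
have gain_gt0 : 0 < gain := gain_pos J_gt0 h_gt0 hJ.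
have gain_dominates : 0 <= b * gain - ln F.
  have -> : ln F = b * (/ b * ln F) by field; lra.
  by have := Rle_abs (/ b * ln F); nra.
have sparse_in_S : inS J h (sparse_config n).
  by apply: subcritical_isolated lc_ge2 _; exact: sparse_config_isolated.
have := log_ratio_bound J_gt0 b_gt0 F_gt0 lc_ge2 lc_lt_side gain_dominates
          sparse_in_S (sparse_exceeds n_ge1 F_big).
move/(Rmult_le_compat_l _ _ _ (Rlt_le _ _ (Rinv_0_lt_compat _ b_gt0)))/Rle_lt_trans.
by apply; apply: decay_arith.
Qed.

Close Scope R_scope.

Theorem lemmaA1 (J h : R) (m : R -> nat) (f : R -> R) :
  (0 < J)%R -> (0 < h)%R -> (h < 2 * J)%R ->
  (forall k : nat, (2 * J / h)%R <> INR k) ->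
  (* |Lambda_beta| -> infinity *)
  (forall M : R, exists b0 : R, forall b : R, (b > b0)%R ->
      (INR (side (m b) * side (m b)) > M)%R) ->
  (* f : (0,oo) -> (0,oo) *)
  (forall b : R, (0 < b)%R -> (0 < f b)%R) ->
  (* f -> infinity *)
  (forall M : R, exists b0 : R, forall b : R, (b > b0)%R -> (f b > M)%R) ->
  (* (1/beta) log f -> 0 *)
  (forall eps : R, (eps > 0)%R -> exists b0 : R, forall b : R, (b > b0)%R ->
      (Rabs (/ b * ln (f b)) < eps)%R) ->
  (* |Lambda_beta| / f -> infinity *)
  (forall M : R, exists b0 : R, forall b : R, (b > b0)%R ->
      (INR (side (m b) * side (m b)) / f b > M)%R) ->
  (* conclusion: (1/beta) log (mu(S \ W) / mu(S)) -> -infinity *)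
  forall M : R, exists b0 : R, forall b : R, (b > b0)%R ->
    (/ b * ln (mu (L := side (m b)) J h b
                  (fun s => inS J h s &&
                     ~~ inW J h (INR (side (m b) * side (m b)) / f b)%R s)
               / mu (L := side (m b)) J h b (fun s => inS J h s)) < - M)%R.
Proof.
move=> J_gt0 h_gt0 hJ _ vol_inf _ f_inf log_f vol_f_inf M.
have gain_gt0 := gain_pos J_gt0 h_gt0 hJ.
set gain := (4 * J / INR (lcrit J h) - h)%R in gain_gt0.
have [b0 large] : eventually (fun b =>
    (((0 < b)%R /\ (/ b < gain / 4)%R) /\ (Rabs (/ b * ln (f b)) < gain / 4)%R) /\
    ((INR (side (m b) * side (m b)) > INR ((lcrit J h).+1 * (lcrit J h).+1))%R /\
     (f b > 9)%R) /\ (INR (side (m b) * side (m b)) / f b * gain > 2 * Rabs M)%R).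
  repeat first [apply: eventually_inv_lt | apply: eventually_and].
  - by apply: Rdiv_lt_0_compat; lra.
  - by apply: log_f; apply: Rdiv_lt_0_compat; lra.
  - exact: vol_inf.
  - exact: f_inf.
  - have [b1 vol_f_big] := vol_f_inf (2 * Rabs M / gain)%R.
    exists b1 => b /vol_f_big /(Rmult_lt_compat_r gain _ _ gain_gt0).
    by rewrite /Rdiv Rmult_assoc Rinv_l ?Rmult_1_r //; apply: Rgt_not_eq.
exists b0 => b /large [[[b_gt0 inv_b] log_small] [[vol_big f_big] ratio_big]].
exact: decay_at_beta.
Qed.
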